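(* Let $\Gamma$ be a weighted digraph with vertex set $\{1,\dots,n\}$, $n>1$, without loops and with strictly positive arc weights, with Laplacian matrix $L$, in-forest dimension $d$, and let $\tilde J=\sigma_{n-d}^{-1}Q_{n-d}$. Then $\tilde J=I-LL^{\#}$, where $L^{\#}$ is the group inverse of $L$.
   Context: $W=(w_{ij})$ is the matrix of arc weights ($w_{ij}>0$ iff there is an arc $i\to j$, else $0$). The Laplacian $L=(\ell_{ij})$: $\ell_{ij}=-w_{ij}$ for $j\ne i$, $\ell_{ii}=\sum_{k\ne i}w_{ik}$. The weight of a subgraph is the product of its arc weights (1 if no arcs); the weight of a set of subgraphs is the sum of their weights. A converging tree is a weakly connected digraph with one vertex (the root) of outdegree 0 and all others of outdegree 1; an in-forest is a spanning subgraph of $\Gamma$ whose weak components are converging trees. The in-forest dimension $d$ is the minimal number of trees in an in-forest (so in-forests have at most $n-d$ arcs). $\sigma_k$ is the total weight of in-forests with $k$ arcs; $Q_k=(q^k_{ij})$ with $q^k_{ij}$ the total weight of in-forests with $k$ arcs in which $i$ lies in a tree rooted at $j$. For a square matrix $A$ of index at most 1 (the index being the least $k\ge0$ with $\operatorname{rank}A^{k+1}=\operatorname{rank}A^k$), the group inverse $A^{\#}$ is the unique matrix $X$ with $AXA=A$, $XAX=X$, $AX=XA$. *)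

From HB Require Import structures.
From mathcomp Require Import all_boot all_order all_algebra.
Set Implicit Arguments. Unset Strict Implicit. Unset Printing Implicit Defensive.
Import Order.TTheory GRing.Theory Num.Theory.
Local Open Scope ring_scope.

Section Forests.
Variables (R : realFieldType) (n : nat) (W : 'M[R]_n).

Definition arcs : {set 'I_n * 'I_n} := [set a | W a.1 a.2 != 0].

Definition frel_of (F : {set 'I_n * 'I_n}) : rel 'I_n := fun i j => (i, j) \in F.

Definition outdeg (F : {set 'I_n * 'I_n}) (v : 'I_n) : nat :=
  #|[set a in F | a.1 == v]|.

(* spanning subgraph (given by its arc set) which is an in-forest:
   outdegrees <= 1 and no directed cycle; weak components are then
   converging trees, whose roots are the vertices of outdegree 0 *)
Definition inforest (F : {set 'I_n * 'I_n}) : bool :=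
  [&& F \subset arcs,
      [forall v, outdeg F v <= 1]%N &
      [forall a in F, ~~ connect (frel_of F) a.2 a.1]].

Definition ntrees (F : {set 'I_n * 'I_n}) : nat := #|[set v | outdeg F v == 0%N]|.

Definition inforest_dim : nat :=
  \big[minn/n]_(F : {set 'I_n * 'I_n} | inforest F) ntrees F.

Definition fweight (F : {set 'I_n * 'I_n}) : R := \prod_(a in F) W a.1 a.2.

Definition sigma (k : nat) : R :=
  \sum_(F : {set 'I_n * 'I_n} | inforest F && (#|F| == k)) fweight F.

Definition in_tree_rooted (F : {set 'I_n * 'I_n}) (i j : 'I_n) : bool :=
  (outdeg F j == 0%N) && connect (frel_of F) i j.

Definition Qmx (k : nat) : 'M[R]_n :=
  \matrix_(i, j) \sum_(F : {set 'I_n * 'I_n} |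
                        [&& inforest F, #|F| == k & in_tree_rooted F i j]) fweight F.

Definition laplacian : 'M[R]_n :=
  \matrix_(i, j) if i == j then \sum_(k | k != i) W i k else - W i j.

End Forests.

Definition is_group_inverse (R : ringType) (n : nat) (A X : 'M[R]_n) : Prop :=
  [/\ A *m X *m A = A, X *m A *m X = X & A *m X = X *m A].

From mathcomp Require Import all_boot all_order all_algebra.
From mathcomp Require Import ring zify.
Import Order.TTheory GRing.Theory Num.Theory.
Set Implicit Arguments. Unset Strict Implicit. Unset Printing Implicit Defensive.
Local Open Scope ring_scope.

(* Expanding (L Q_k)_ij = sum_l w_il (q^k_ij - q^k_lj) over pairs (F, l) of an
   in-forest F with k arcs and a vertex l outside the tree of i gives the
   recurrence Q_(k+1) = sigma_(k+1) I - L Q_k: when i is not a root of F, moving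
   the out-arc of i onto l is a sign-reversing involution on these pairs, and
   when i is a root, adding the arc (i, l) is a bijection onto the in-forests
   with k+1 arcs in which i is not a root.  Hence Q_m = sigma_m I - L S with S
   commuting with L.  For m = n - d there is no in-forest with m+1 arcs, so
   L Q_m = 0, while sigma_m > 0.  Then r = S / sigma_m satisfies L r L = L and
   L r = r L, so r L r is the group inverse of L, and L L^# = L r = I - Q_m / sigma_m. *)

Lemma connect_forward (T : finType) (r : rel T) (P : pred T) x y :
  (forall a b, P a -> r a b -> P b) -> P x -> connect r x y -> P y.
Proof.
move=> Pr Px /connectP [p pth ->]; elim: p x Px pth => [|z p IHp] x Px //=.
by case/andP=> rxz; apply: IHp; apply: Pr rxz.
Qed.

Section InForests.
Variables (R : realFieldType) (n : nat) (W : 'M[R]_n).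
Local Notation T := 'I_n.
Local Notation e := (@frel_of n).
Implicit Types (F G : {set T * T}) (x y z v a b i j l o : T).

Lemma outdeg_eq0P F v : reflect (forall y, (v, y) \notin F) (outdeg F v == 0%N).
Proof.
rewrite /outdeg cards_eq0; apply: (iffP eqP) => [F0 y|nF].
  by apply/negP => Fvy; have := in_set0 (v, y); rewrite -F0 inE Fvy eqxx.
apply/setP => -[a b]; rewrite !inE /=; apply/negP => /andP [Fab /eqP av].
by move: (nF b); rewrite -av Fab.
Qed.

Lemma outdeg_set0 v : outdeg set0 v = 0%N.
Proof. by apply/eqP/outdeg_eq0P => y; rewrite inE. Qed.

Lemma outdeg0_connect F x y : outdeg F x == 0%N -> connect (e F) x y -> y = x.
Proof.
move/outdeg_eq0P=> Fx /connectP [[|z p] //= /andP [Fxz _] _].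
by move: Fxz; rewrite /frel_of (negbTE (Fx z)).
Qed.

Lemma in_tree_rooted_outdeg0 F i j : outdeg F i == 0%N -> in_tree_rooted F i j = (i == j).
Proof.
move=> Fi; rewrite /in_tree_rooted; case: (i =P j) => [<-|ij]; first by rewrite Fi connect0.
by apply/negbTE/andP => -[_ /(outdeg0_connect Fi) ji]; exact: ij (esym ji).
Qed.

Lemma inforest_arc F x y : inforest W F -> (x, y) \in F -> W x y != 0.
Proof. by case/and3P=> /subsetP FW _ _ /FW; rewrite inE. Qed.

Lemma inforest_acyclic F x y : inforest W F -> (x, y) \in F -> ~~ connect (e F) y x.
Proof. by case/and3P=> _ _ /forallP Facyc Fxy; have := Facyc (x, y); rewrite Fxy. Qed.

Lemma inforest_functional F x y z :
  inforest W F -> (x, y) \in F -> (x, z) \in F -> y = z.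
Proof.
case/and3P=> _ /forallP /(_ x) /card_le1_eqP Fx _ Fxy Fxz.
have Fxy' : (x, y) \in [set a in F | a.1 == x] by rewrite inE Fxy /=.
have Fxz' : (x, z) \in [set a in F | a.1 == x] by rewrite inE Fxz /=.
by case: (Fx _ _ Fxy' Fxz').
Qed.

Lemma inforest_connect_total F x a b : inforest W F ->
  connect (e F) x a -> connect (e F) x b -> connect (e F) a b || connect (e F) b a.
Proof.
move=> fF /connectP [p pth ->]; elim: p x pth => [|z p IHp] x /=; first by move=> _ ->.
case/andP=> Fxz pth /connectP [[|z' q] /=].
  by move=> _ ->; apply/orP; right; apply/connectP; exists (z :: p); rewrite //= Fxz.
case/andP=> Fxz' qth bq; apply: (IHp z pth); have z'z := inforest_functional fF Fxz' Fxz.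
by apply/connectP; exists q; rewrite -?z'z.
Qed.

Lemma in_tree_rooted_uniq F x j1 j2 :
  inforest W F -> in_tree_rooted F x j1 -> in_tree_rooted F x j2 -> j1 = j2.
Proof.
move=> fF /andP [j1F xj1] /andP [j2F xj2].
case/orP: (inforest_connect_total fF xj1 xj2); last exact: outdeg0_connect.
by move/(outdeg0_connect j1F).
Qed.

Section AddArc.
Variables (H : {set T * T}) (i l : T).
Hypotheses (fH : inforest W H) (Hi : outdeg H i == 0%N) (Wil : W i l != 0)
  (nli : ~~ connect (e H) l i).
Let G := (i, l) |: H.

Lemma outdeg0_arc_notin : (i, l) \notin H.
Proof. exact: outdeg_eq0P Hi l. Qed.

Lemma connect_add_arc v y : connect (e G) v y =
  connect (e H) v y || (connect (e H) v i && connect (e H) l y).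
Proof.
have HG : subrel (e H) (connect (e G)) by move=> a b Hab; apply/connect1/setU1r.
apply/idP/idP => [|/orP [/(connect_sub HG) //|/andP [vi ly]]]; last first.
  apply: connect_trans (connect_sub HG vi) (connect_trans (connect1 _) (connect_sub HG ly)).
  exact: setU11.
pose P y := connect (e H) v y || (connect (e H) v i && connect (e H) l y).
apply: (connect_forward (P := P)); last by rewrite /P connect0.
rewrite /P => a b /orP va /setU1P [[ai bl]|Hab].
  by subst a b; case: va => [->|/andP [_]]; rewrite ?connect0 ?orbT // (negbTE nli).
case: va => [va|/andP [-> lb]]; first by rewrite (connect_trans va (connect1 Hab)).
by rewrite (connect_trans lb (connect1 Hab)) orbT.
Qed.

Lemma outdeg_add_arc v : outdeg G v = if v == i then 1%N else outdeg H v.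
Proof.
rewrite /outdeg; case: eqP => [->|vi].
  rewrite -(cards1 (i, l)); apply: eq_card => -[a b]; rewrite !inE /= !xpair_eqE.
  case: (a =P i) => [->|_]; rewrite ?andbF ?andbT //=.
  by rewrite (negbTE (outdeg_eq0P _ _ Hi b)) orbF.
apply: eq_card => -[a b]; rewrite !inE /= xpair_eqE.
by case: (a =P v) => [->|_]; rewrite ?andbF ?andbT // (introF eqP vi).
Qed.

Lemma inforest_add_arc : inforest W G.
Proof.
case/and3P: fH => HW /forallP Hdeg /forallP Hacyc; apply/and3P; split.
- by rewrite subUset sub1set inE Wil.
- by apply/forallP => v; rewrite outdeg_add_arc; case: eqP.
apply/forallP => -[a b]; apply/implyP; rewrite in_setU1 => /orP [/eqP [-> ->]|Hab].
  by rewrite connect_add_arc (negbTE nli).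
rewrite connect_add_arc negb_or (implyP (Hacyc (a, b)) Hab) /=.
apply/negP => /andP [bi la]; move/negP: nli; apply.
exact: connect_trans (connect_trans la (connect1 Hab)) bi.
Qed.

Lemma in_tree_rooted_add_arc v j : in_tree_rooted G v j =
  if connect (e H) v i then in_tree_rooted H l j else in_tree_rooted H v j.
Proof.
have Gj : (outdeg G j == 0%N) = (outdeg H j == 0%N) && (j != i).
  by rewrite outdeg_add_arc; case: (j =P i); rewrite /= ?andbF ?andbT.
rewrite /in_tree_rooted Gj connect_add_arc.
case vi: (connect (e H) v i); rewrite ?andbF ?orbF /=; last first.
  rewrite -andbA; congr (_ && _); apply/andb_idl => vj.
  by apply: contraFneq vi => ji; rewrite -ji.
apply/idP/idP => [/andP [/andP [Hj ji] /orP [vj|->]]|/andP [Hj lj]]; rewrite ?Hj //.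
  case/orP: (inforest_connect_total fH vi vj) => [/(outdeg0_connect Hi)|/(outdeg0_connect Hj)];
    by move=> eq_ij; rewrite eq_ij eqxx in ji.
by rewrite lj orbT andbT; apply: contraNneq nli => ji; rewrite -ji.
Qed.

Lemma card_add_arc : #|G| = #|H|.+1.
Proof. by rewrite cardsU1 outdeg0_arc_notin. Qed.

Lemma fweight_add_arc : fweight W G = W i l * fweight W H.
Proof. by rewrite /fweight big_setU1 ?outdeg0_arc_notin. Qed.

End AddArc.

Section RemoveArc.
Variables (G : {set T * T}) (i l : T).
Hypotheses (fG : inforest W G) (Gil : (i, l) \in G).
Let H := G :\ (i, l).

Lemma connect_remove_arc : subrel (connect (e H)) (connect (e G)).
Proof. by apply: connect_sub => a b /(subsetP (subD1set _ _)) Gab; apply: connect1. Qed.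

Lemma inforest_remove_arc : inforest W H.
Proof.
case/and3P: fG => GW /forallP Gdeg /forallP Gacyc.
have HG := subsetP (subD1set G (i, l)).
apply/and3P; split; first exact: subset_trans (subD1set _ _) GW.
  apply/forallP => v; apply: leq_trans (Gdeg v); apply: subset_leq_card.
  by apply/subsetP => a; rewrite !inE => /andP [/andP [_ ->] ->].
apply/forallP => a; apply/implyP => Ha.
exact: contra (@connect_remove_arc _ _) (implyP (Gacyc a) (HG a Ha)).
Qed.

Lemma outdeg_remove_arc : outdeg H i == 0%N.
Proof.
apply/outdeg_eq0P => y; rewrite !inE; apply/negP => /andP [yl Giy].
by move: yl; rewrite (inforest_functional fG Giy Gil) eqxx.
Qed.

Lemma acyclic_remove_arc : ~~ connect (e H) l i.
Proof. exact: contra (@connect_remove_arc _ _) (inforest_acyclic fG Gil). Qed.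

End RemoveArc.

Definition out_nb F x := odflt x [pick y | (x, y) \in F].

Lemma out_nb_eq F x y : inforest W F -> (x, y) \in F -> out_nb F x = y.
Proof.
move=> fF Fxy; rewrite /out_nb; case: pickP => [z Fxz|/(_ y)] /=; last by rewrite Fxy.
exact: inforest_functional fF Fxz Fxy.
Qed.

Lemma out_nb_mem F x : outdeg F x != 0%N -> (x, out_nb F x) \in F.
Proof.
move=> Fx; rewrite /out_nb; case: pickP => [//|nF].
by case/negP: Fx; apply/outdeg_eq0P => y; rewrite nF.
Qed.

Definition same_tree F x y := [forall j, in_tree_rooted F x j == in_tree_rooted F y j].

Lemma not_same_tree_connect F x l : inforest W F -> outdeg F x == 0%N ->
  ~~ same_tree F x l -> ~~ connect (e F) l x.
Proof.
move=> fF Fx; apply: contra => lx; apply/forallP => j.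
have xtree : in_tree_rooted F l x by rewrite /in_tree_rooted Fx.
rewrite in_tree_rooted_outdeg0 //; apply/eqP; apply/idP/idP => [/eqP <- //|ltree].
by apply/eqP; exact: in_tree_rooted_uniq fF xtree ltree.
Qed.

Lemma not_same_tree_remove_arc G x o : inforest W G -> (x, o) \in G ->
  ~~ same_tree (G :\ (x, o)) x o.
Proof.
move=> fG Gxo; apply/negP => /forallP /(_ x) /eqP.
rewrite in_tree_rooted_outdeg0 ?outdeg_remove_arc // eqxx => /esym /andP [_ ox].
by move: (acyclic_remove_arc fG Gxo); rewrite ox.
Qed.

End InForests.

Lemma sum_sign_reversing_involution (R : numDomainType) (I : finType)
    (P : pred I) (f : I -> R) (phi : I -> I) :
  (forall x, P x -> [/\ P (phi x), phi (phi x) = x & f (phi x) = - f x]) ->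
  \sum_(x | P x) f x = 0.
Proof.
move=> phiP; pose psi x := if P x then phi x else x.
have psiK : involutive psi.
  move=> x; rewrite /psi; case Px: (P x); last by rewrite Px.
  by have [-> -> _] := phiP x Px.
have Ppsi x : P (psi x) = P x.
  by rewrite /psi; case Px: (P x); [have [] := phiP x Px | rewrite Px].
have sumN : \sum_(x | P x) f x = - \sum_(x | P x) f x.
  rewrite {1}(reindex_inj (inv_inj psiK)) -sumrN (eq_bigl _ _ Ppsi) /=.
  by apply: eq_bigr => x Px; rewrite /psi Px; have [] := phiP x Px.
have : (\sum_(x | P x) f x) *+ 2 == 0 by rewrite mulr2n {1}sumN addNr.
by rewrite mulrn_eq0 => /eqP.
Qed.

Section Recurrence.
Variables (R : realFieldType) (n : nat) (W : 'M[R]_n).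
Local Notation T := 'I_n.
Local Notation e := (@frel_of n).
Implicit Types (G : {set T * T}) (x y : T).

Lemma QmxE k x y : Qmx W k x y =
  \sum_(F | inforest W F && (#|F| == k)) fweight W F * (in_tree_rooted F x y)%:R.
Proof.
rewrite mxE (eq_bigl (fun F => (inforest W F && (#|F| == k)) && in_tree_rooted F x y)).
  by rewrite big_mkcondr; apply: eq_bigr => F _; case: in_tree_rooted; rewrite ?mulr1 ?mulr0.
by move=> F; rewrite andbA.
Qed.

Lemma laplacian_mulmxE (A : 'M[R]_n) x y :
  (laplacian W *m A) x y = \sum_l W x l * (A x y - A l y).
Proof.
rewrite mxE (bigD1 x) //= [RHS](bigD1 x) //= subrr mulr0 add0r mxE eqxx.
rewrite mulr_suml -big_split /=; apply: eq_bigr => l lx.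
by rewrite mxE eq_sym (negbTE lx) mulrBr mulNr.
Qed.

Variables (k : nat) (i j : T).

Definition forest_k (p : {set T * T} * T) := inforest W p.1 && (#|p.1| == k).

Definition arc_term (p : {set T * T} * T) : R :=
  W i p.2 * fweight W p.1 *
  ((in_tree_rooted p.1 i j)%:R - (in_tree_rooted p.1 p.2 j)%:R).

Lemma laplacian_Qmx_arc_terms :
  (laplacian W *m Qmx W k) i j = \sum_(p | forest_k p) arc_term p.
Proof.
rewrite laplacian_mulmxE.
under eq_bigr => l _ do rewrite !QmxE -sumrB mulr_sumr.
rewrite exchange_big pair_big /=; apply: eq_big => [[F l]|[F l] _]; first by rewrite andbT.
by rewrite /arc_term /=; ring.
Qed.

Definition crossing (p : {set T * T} * T) := (W i p.2 != 0) && ~~ same_tree p.1 i p.2.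

Lemma arc_terms_crossing :
  \sum_(p | forest_k p) arc_term p = \sum_(p | forest_k p && crossing p) arc_term p.
Proof.
rewrite (bigID crossing) /= [X in _ + X]big1 ?addr0 // => -[F l] /andP [_].
rewrite /crossing /arc_term /same_tree negb_and !negbK /= => /orP [/eqP ->|].
  by rewrite !mul0r.
by move=> /forallP /(_ j) /eqP ->; rewrite subrr mulr0.
Qed.

Definition reroute (p : {set T * T} * T) : {set T * T} * T :=
  ((i, p.2) |: (p.1 :\ (i, out_nb p.1 i)), out_nb p.1 i).

Lemma reroute_spec p : forest_k p && crossing p && (outdeg p.1 i != 0%N) ->
  [/\ forest_k (reroute p) && crossing (reroute p) && (outdeg (reroute p).1 i != 0%N),
      reroute (reroute p) = p & arc_term (reroute p) = - arc_term p].
Proof.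
case: p => F l; rewrite /forest_k /crossing /=.
move=> /andP [/andP [/andP [fF /eqP cardF] /andP [Wil not_il]] Fi].
rewrite /reroute /=; set o := out_nb F i; set H := F :\ (i, o).
have Fio : (i, o) \in F by exact: out_nb_mem.
have fH : inforest W H by exact: inforest_remove_arc.
have Hi : outdeg H i == 0%N by exact: outdeg_remove_arc fF Fio.
have noi : ~~ connect (e H) o i by exact: acyclic_remove_arc fF Fio.
have HF : (i, o) |: H = F by exact: setD1K Fio.
have rootF v :
    in_tree_rooted F v =1 in_tree_rooted H (if connect (e H) v i then o else v).
  by move=> y; rewrite -HF (in_tree_rooted_add_arc fH Hi noi); case: ifP.
have nli : ~~ connect (e H) l i.
  apply: contra not_il => li; apply/forallP => y.
  by rewrite !rootF connect0 li.
have rootF' v : in_tree_rooted ((i, l) |: H) v =1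
    in_tree_rooted H (if connect (e H) v i then l else v).
  by move=> y; rewrite (in_tree_rooted_add_arc fH Hi nli); case: ifP.
have fF' := inforest_add_arc fH Hi Wil nli.
rewrite /forest_k /crossing /arc_term /= !rootF !rootF' connect0 (negbTE noi) (negbTE nli).
rewrite fF' (out_nb_eq fF' (setU11 _ _)) setU1K ?outdeg0_arc_notin // (inforest_arc fF Fio).
rewrite outdeg_add_arc // eqxx -cardF -HF !card_add_arc // !fweight_add_arc // eqxx.
split => //; last by ring.
rewrite !andbT; apply: contra not_il => /forallP same; apply/forallP => y.
by have := same y; rewrite !rootF' !rootF connect0 (negbTE noi) (negbTE nli) eq_sym.
Qed.

Lemma arc_terms_nonroot :
  \sum_(p | forest_k p && crossing p && (outdeg p.1 i != 0%N)) arc_term p = 0.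
Proof. exact: sum_sign_reversing_involution reroute_spec. Qed.

Definition cut_out_arc G : {set T * T} * T := (G :\ (i, out_nb G i), out_nb G i).

Lemma cut_out_arcK p : forest_k p && crossing p && (outdeg p.1 i == 0%N) ->
  cut_out_arc ((i, p.2) |: p.1) = p.
Proof.
case: p => H l; rewrite /forest_k /crossing /=.
move=> /andP [/andP [/andP [fH _] /andP [Wil nil]] Hi].
have fG := inforest_add_arc fH Hi Wil (not_same_tree_connect fH Hi nil).
by rewrite /cut_out_arc /= (out_nb_eq fG (setU11 _ _)) setU1K ?outdeg0_arc_notin.
Qed.

Lemma cut_out_arc_domain G :
  forest_k (cut_out_arc G) && crossing (cut_out_arc G) &&
    (outdeg (cut_out_arc G).1 i == 0%N) &&
    ((i, (cut_out_arc G).2) |: (cut_out_arc G).1 == G) =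
  inforest W G && (#|G| == k.+1) && (outdeg G i != 0%N).
Proof.
rewrite /cut_out_arc /forest_k /crossing /=; set o := out_nb G i; set H := G :\ (i, o).
apply/idP/idP => [/andP [/andP [/andP [/andP [fH /eqP cardH] /andP [Wio nio]] Hi] /eqP HG]|].
  rewrite -HG (inforest_add_arc fH Hi Wio (not_same_tree_connect fH Hi nio)).
  by rewrite card_add_arc // cardH outdeg_add_arc // !eqxx.
move=> /andP [/andP [fG /eqP cardG] Gi]; have Gio := out_nb_mem Gi.
rewrite inforest_remove_arc // (inforest_arc fG Gio) (not_same_tree_remove_arc fG Gio).
rewrite (outdeg_remove_arc fG Gio) setD1K // eqxx !andbT.
by move: cardG; rewrite /H (cardsD1 (i, o)) Gio add1n => /succn_inj/eqP ->.
Qed.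

Lemma arc_terms_root :
  \sum_(p | forest_k p && crossing p && (outdeg p.1 i == 0%N)) arc_term p =
  \sum_(G | inforest W G && (#|G| == k.+1))
     fweight W G * ((i == j)%:R - (in_tree_rooted G i j)%:R).
Proof.
rewrite [RHS](bigID (fun G => outdeg G i == 0%N)) /= [X in _ = X + _]big1 ?add0r; last first.
  by move=> G /andP [_ Gi]; rewrite in_tree_rooted_outdeg0 // subrr mulr0.
rewrite (reindex_onto cut_out_arc (fun p => (i, p.2) |: p.1) cut_out_arcK).
apply: eq_big => G; first exact: cut_out_arc_domain.
rewrite cut_out_arc_domain => /andP [/andP [fG _] Gi]; have Gio := out_nb_mem Gi.
rewrite /cut_out_arc /arc_term /=; set o := out_nb G i; set H := G :\ (i, o).
have fH : inforest W H by exact: inforest_remove_arc.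
have Hi : outdeg H i == 0%N by exact: outdeg_remove_arc fG Gio.
have noi : ~~ connect (e H) o i by exact: acyclic_remove_arc fG Gio.
rewrite -{1 2}(setD1K Gio) fweight_add_arc // (in_tree_rooted_add_arc fH Hi noi) connect0.
by rewrite in_tree_rooted_outdeg0 // mulrA.
Qed.

Lemma Qmx_recE : (laplacian W *m Qmx W k) i j =
  sigma W k.+1 * (i == j)%:R - Qmx W k.+1 i j.
Proof.
rewrite laplacian_Qmx_arc_terms arc_terms_crossing.
rewrite (bigID (fun p => outdeg p.1 i == 0%N)) /=.
rewrite arc_terms_nonroot addr0 arc_terms_root QmxE /sigma mulr_suml -sumrB.
by apply: eq_bigr => G _; rewrite mulrBr.
Qed.

End Recurrence.

Lemma Qmx_rec (R : realFieldType) (n : nat) (W : 'M[R]_n) k :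
  Qmx W k.+1 = sigma W k.+1 *: 1%:M - laplacian W *m Qmx W k.
Proof.
by apply/matrixP => i j; rewrite [RHS]mxE [X in _ + X]mxE Qmx_recE !mxE opprB addrC subrK.
Qed.

Section QmxPolynomial.
Variables (R : realFieldType) (n : nat) (W : 'M[R]_n).

Lemma Qmx0 : Qmx W 0 = sigma W 0 *: 1%:M.
Proof.
apply/matrixP => i j; rewrite QmxE !mxE /sigma mulr_suml.
apply: eq_bigr => F /andP [_ /eqP /cards0_eq ->].
by rewrite in_tree_rooted_outdeg0 // outdeg_set0.
Qed.

Lemma laplacian_Qmx_comm k : laplacian W *m Qmx W k = Qmx W k *m laplacian W.
Proof.
elim: k => [|k IHk]; first by rewrite Qmx0 -scalemxAr -scalemxAl mulmx1 mul1mx.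
by rewrite Qmx_rec mulmxBr mulmxBl -scalemxAr -scalemxAl mulmx1 mul1mx -mulmxA -IHk.
Qed.

Lemma Qmx_decomp m : exists2 S : 'M[R]_n,
  Qmx W m = sigma W m *: 1%:M - laplacian W *m S & laplacian W *m S = S *m laplacian W.
Proof.
case: m => [|k]; first by exists 0; rewrite ?Qmx0 mulmx0 ?subr0 ?mul0mx.
by exists (Qmx W k); [exact: Qmx_rec | exact: laplacian_Qmx_comm].
Qed.

End QmxPolynomial.

Section GroupInverse.
Variables (R : nzRingType) (n : nat) (A r : 'M[R]_n).
Hypotheses (Ar : A *m r = r *m A) (ArA : A *m r *m A = A).

Lemma group_inverse_inner : is_group_inverse A (r *m A *m r).
Proof.
have AX : A *m (r *m A *m r) = A *m r by rewrite !mulmxA ArA.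
have XA : r *m A *m r *m A = A *m r by rewrite -(mulmxA r) -(mulmxA r) ArA Ar.
split; [by rewrite AX ArA | by rewrite XA -Ar !mulmxA ArA | by rewrite AX XA].
Qed.

Lemma mulmx_group_inverse X : is_group_inverse A X -> A *m X = A *m r.
Proof.
case=> AXA _ AX.
have <- : A *m r *m (A *m X) = A *m X by rewrite mulmxA ArA.
by rewrite Ar -mulmxA AX [A *m (X *m A)]mulmxA AXA.
Qed.

End GroupInverse.

Lemma group_inverse_from_annihilator (R : fieldType) (n : nat)
    (A S Q : 'M[R]_n) (s : R) :
  s != 0 -> Q = s *: 1%:M - A *m S -> A *m S = S *m A -> A *m Q = 0 ->
  (exists X, is_group_inverse A X) /\
  (forall X, is_group_inverse A X -> s^-1 *: Q = 1%:M - A *m X).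
Proof.
move=> s_neq0 QE AS AQ; pose r := s^-1 *: S.
have Ar : A *m r = r *m A by rewrite -scalemxAr -scalemxAl AS.
have QrE : s^-1 *: Q = 1%:M - A *m r.
  by rewrite QE scalerBr scalerA mulVf // scale1r -scalemxAr.
have ArA : A *m r *m A = A.
  have : A *m (s^-1 *: Q) = 0 by rewrite -scalemxAr AQ scaler0.
  by rewrite QrE mulmxBr mulmx1 -mulmxA -Ar mulmxA => /subr0_eq.
split; first by exists (r *m A *m r); exact: group_inverse_inner.
by move=> X AX; rewrite QrE (mulmx_group_inverse Ar ArA AX).
Qed.

Section InForestDimension.
Variables (R : realFieldType) (n : nat) (W : 'M[R]_n).
Implicit Types (F : {set 'I_n * 'I_n}).
Local Notation d := (inforest_dim W).

Lemma inforest_card_ntrees F : inforest W F -> (#|F| + ntrees F)%N = n.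
Proof.
case/and3P => _ /forallP Fdeg _.
have -> : #|F| = (\sum_v outdeg F v)%N.
  rewrite -sum1_card (partition_big fst predT) //=; apply: eq_bigr => v _.
  by rewrite /outdeg -sum1_card; apply: eq_bigl => a; rewrite inE.
have -> : (\sum_v outdeg F v)%N = #|[pred v | outdeg F v != 0%N]|.
  rewrite -sum1_card [RHS]big_mkcond /=; apply: eq_bigr => v _; rewrite inE.
  by case: (outdeg F v) (Fdeg v) => [|[|]].
rewrite /ntrees addnC -[RHS](card_ord n) -(cardC [pred v | outdeg F v == 0%N]).
by congr (_ + _)%N; apply: eq_card => v; rewrite !inE.
Qed.

Lemma inforest0 : inforest W set0.
Proof.
apply/and3P; split; first exact: sub0set.
  by apply/forallP => v; rewrite outdeg_set0.
by apply/forallP => a; rewrite inE.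
Qed.

Lemma inforest_dim_le F : inforest W F -> (d <= ntrees F)%N.
Proof. exact: (bigmin_le_cond n (@ntrees n)). Qed.

Lemma inforest_dim_attained : exists2 F, inforest W F & ntrees F = d.
Proof.
have : (d == n) || [exists F, inforest W F && (ntrees F == d)].
  rewrite /inforest_dim; elim/big_ind: _ => [|x y Hx Hy|F fF]; first by rewrite eqxx.
    by case: (leqP x y) => _; [exact: Hx | exact: Hy].
  by apply/orP; right; apply/existsP; exists F; rewrite fF eqxx.
case/orP => [/eqP dn|/existsP [F /andP [fF /eqP FF]]]; last by exists F.
exists set0; first exact: inforest0.
by have := inforest_card_ntrees inforest0; rewrite cards0 dn.
Qed.

Lemma card_inforest_le F : inforest W F -> (#|F| <= n - d)%N.
Proof.
by move=> fF; have := inforest_card_ntrees fF; have := inforest_dim_le fF; lia.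
Qed.

Lemma sigma_eq0 k : (n - d < k)%N -> sigma W k = 0.
Proof.
move=> dk; rewrite /sigma big_pred0 // => F; apply/negbTE/andP => -[fF /eqP cardF].
by have := card_inforest_le fF; rewrite cardF leqNgt dk.
Qed.

Lemma Qmx_eq0 k : (n - d < k)%N -> Qmx W k = 0.
Proof.
move=> dk; apply/matrixP => i j; rewrite QmxE mxE big_pred0 // => F.
apply/negbTE/andP => -[fF /eqP cardF].
by have := card_inforest_le fF; rewrite cardF leqNgt dk.
Qed.

Lemma laplacian_Qmx_dim : laplacian W *m Qmx W (n - d) = 0.
Proof.
have := Qmx_rec W (n - d); rewrite Qmx_eq0 ?sigma_eq0 // scale0r sub0r.
by move/eqP; rewrite eq_sym oppr_eq0 => /eqP.
Qed.

Lemma sigma_dim_gt0 : (forall i j, 0 <= W i j) -> 0 < sigma W (n - d).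
Proof.
move=> W_ge0; have [F fF Fd] := inforest_dim_attained.
have cardF : #|F| = (n - d)%N by have := inforest_card_ntrees fF; rewrite Fd; lia.
rewrite /sigma (bigD1 F) /=; last by rewrite fF cardF eqxx.
apply: ltr_pwDl.
  apply: prodr_gt0 => -[x y] Fxy /=.
  by rewrite lt_def (inforest_arc fF Fxy) W_ge0.
by apply: sumr_ge0 => G _; apply: prodr_ge0 => a _; apply: W_ge0.
Qed.

End InForestDimension.

Theorem proposition14 (R : realFieldType) (n : nat) (W : 'M[R]_n)
  (Hn : (1 < n)%N)
  (Hloop : forall i, W i i = 0)
  (Hnonneg : forall i j, 0 <= W i j) :
  let L := laplacian W in
  let d := inforest_dim W in
  let Jt := (sigma W (n - d))^-1 *: Qmx W (n - d) in
  (exists X, is_group_inverse L X) /\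
  (forall X, is_group_inverse L X -> Jt = 1%:M - L *m X).
Proof.
move=> L d Jt; have [S QS LS] := Qmx_decomp W (n - d).
apply: group_inverse_from_annihilator QS LS (laplacian_Qmx_dim W).
by rewrite gt_eqF // sigma_dim_gt0.
Qed.
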